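(* Let $a,b\ge1$ and $P=[a]\times[b]$. For $1\le i\le a$, with $B=\{i\}\times[b]$, we have $\sum_{p\in B}T_p^-\equiv^q q^{a-i}\frac{[b]_q}{[a+b]_q}$. For $1\le j\le b$, with $B=[a]\times\{j\}$, we have $\sum_{p\in B}T_p^-\equiv^q q^{b-j}\frac{[a]_q}{[a+b]_q}$.
   Context: $[a]\times[b]=\{(i,j)\colon1\le i\le a,1\le j\le b\}$ with $(i,j)\le(i',j')$ iff $i\le i'$ and $j\le j'$. $\mathcal{J}(P)$ is the set of order ideals. For $p\in P$, $I\in\mathcal{J}(P)$: $T_p^+(I)=1$ if $p$ is minimal in $P\setminus I$, else $0$; $T_p^-(I)=1$ if $p$ is maximal in $I$, else $0$; $T_p^q=T_p^+-qT_p^-$ with $q$ an indeterminate. For $f,g\colon\mathcal{J}(P)\to\mathbb{R}(q)$, $f\equiv^q g$ means $f-g=\sum_{p\in P}c_p(q)T_p^q$ for some $c_p(q)\in\mathbb{R}(q)$; an element of $\mathbb{R}(q)$ denotes a constant function. $[m]_q=1+q+\dots+q^{m-1}$. *)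

From HB Require Import structures.
From mathcomp Require Import all_boot all_order all_algebra.
From mathcomp Require Import fraction.
From mathcomp Require Import reals.
Set Implicit Arguments. Unset Strict Implicit. Unset Printing Implicit Defensive.
Import Order.TTheory GRing.Theory Num.Theory.
Local Open Scope ring_scope.

(* The poset [a] x [b], encoded 0-based: the element (i,j) of the paper
   (1 <= i <= a, 1 <= j <= b) is the pair (i-1, j-1) : 'I_a * 'I_b. *)
Definition grid (a b : nat) : finType := ('I_a * 'I_b)%type.

Definition gle a b (x y : grid a b) : bool :=
  ((x.1 <= y.1)%N && (x.2 <= y.2)%N).

Definition glt a b (x y : grid a b) : bool := (x != y) && gle x y.

Definition is_ideal a b (I : {set grid a b}) : bool :=
  [forall x, [forall y, (gle y x && (x \in I)) ==> (y \in I)]].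

Definition RQ (R : realType) := {fraction {poly R}}.
Definition qvar (R : realType) : RQ R := tofrac ('X : {poly R}).

Definition qint (R : realType) (m : nat) : RQ R := \sum_(k < m) (qvar R) ^+ k.

Definition Tplus (R : realType) a b (p : grid a b) (I : {set grid a b}) : RQ R :=
  ((p \notin I) && [forall r, glt r p ==> (r \in I)])%:R.

Definition Tminus (R : realType) a b (p : grid a b) (I : {set grid a b}) : RQ R :=
  ((p \in I) && [forall r, glt p r ==> (r \notin I)])%:R.

Definition Tq (R : realType) a b (p : grid a b) (I : {set grid a b}) : RQ R :=
  Tplus R p I - qvar R * Tminus R p I.

Definition qequiv (R : realType) a b (f g : {set grid a b} -> RQ R) : Prop :=
  exists c : grid a b -> RQ R,
    forall I : {set grid a b}, is_ideal I ->
      f I - g I = \sum_(p : grid a b) c p * Tq R p I.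

From HB Require Import structures.
From mathcomp Require Import all_boot all_order all_algebra.
From mathcomp Require Import fraction.
From mathcomp Require Import reals.
From mathcomp Require Import zify ring.
Import Order.TTheory GRing.Theory Num.Theory.
Local Open Scope ring_scope.
Set Implicit Arguments. Unset Strict Implicit. Unset Printing Implicit Defensive.

(* An order ideal I of [a] x [b] is a Young diagram, determined by its
   nonincreasing row lengths.  Row x of I has a maximal element iff row x+1 is
   strictly shorter, which is also exactly when row x+1 of the complement has a
   minimal element: the row sums of T^- and T^+ satisfy D_x = U_{x+1}.  As the
   T^q summed over a row is congruent to 0, U_x ≡ q D_x, so D_x ≡ q^(a-x) u
   with u = [(a,1) ∈ I]; and U_1 = 1 - s with s = [(1,b) ∈ I] gives
   1 - s ≡ q^a u.  By transposition 1 - u ≡ q^b s, and solving this linear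
   system gives u ≡ [b]_q / [a+b]_q.  Columns are rows of the transpose. *)

Lemma gltE a b (p r : grid a b) :
  glt p r = ((p.1 < r.1) && (p.2 <= r.2))%N || ((p.1 == r.1 :> nat) && (p.2 < r.2))%N.
Proof. by case: p r => [x y] [x' y']; rewrite /glt /gle xpair_eqE -!val_eqE /=; lia. Qed.

Section RowLengths.
Variables (R : realType) (a b : nat) (I : {set grid a b}).
Hypothesis idealI : is_ideal I.

Lemma ideal_down (x y : grid a b) : gle y x -> x \in I -> y \in I.
Proof. by move=> le_yx xI; move/forallP/(_ x)/forallP/(_ y): idealI; rewrite le_yx xI. Qed.

Definition row_length (x : nat) : nat :=
  (\max_(z : grid a b | (z.1 == x :> nat) && (z \in I)) z.2.+1)%N.

Lemma mem_ideal_row (p : grid a b) : (p \in I) = (p.2 < row_length p.1)%N.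
Proof.
apply/idP/idP => [pI | ].
  by apply: (@leq_bigmax_cond _ _ (fun z : grid a b => z.2.+1)); rewrite eqxx pI.
apply: contraLR => pI; rewrite -leqNgt; apply/bigmax_leqP => z /andP[/eqP z1 zI].
rewrite ltnNge; move: pI; apply: contraNN => le_pz.
by apply: ideal_down zI; rewrite /gle z1 leqnn.
Qed.

Lemma row_length_nonincr m n : (m <= n)%N -> (row_length n <= row_length m)%N.
Proof.
move=> le_mn; apply/bigmax_leqP => z /andP[/eqP z1 zI].
have lt_ma : (m < a)%N by rewrite (leq_ltn_trans le_mn) // -z1.
pose z' : grid a b := (Ordinal lt_ma, z.2).
have z'I : z' \in I by apply: ideal_down zI; rewrite /gle /= z1 le_mn leqnn.
by rewrite mem_ideal_row in z'I.
Qed.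

Lemma row_length_le n : (row_length n <= b)%N.
Proof. by apply/bigmax_leqP => z _; exact: ltn_ord. Qed.

Lemma row_length_out n : (a <= n)%N -> row_length n = 0%N.
Proof.
move=> le_an; apply/eqP; rewrite -leqn0; apply/bigmax_leqP => z /andP[/eqP z1 _].
by have := ltn_ord z.1; rewrite z1 ltnNge le_an.
Qed.

Lemma maximal_row_length (p : grid a b) :
  [forall r, glt p r ==> (r \notin I)] =
  (row_length p.1 <= p.2.+1)%N && (row_length p.1.+1 <= p.2)%N.
Proof.
apply/forallP/andP => [maxp | [le_p le_next] r].
  by split; apply/bigmax_leqP => z /andP[/eqP z1 zI]; have := maxp z;
    rewrite zI gltE z1; lia.
apply/implyP; rewrite gltE mem_ideal_row -leqNgt.
case/orP => [/andP[lt1 le2] | /andP[/eqP <- lt2]].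
  exact: leq_trans (row_length_nonincr lt1) (leq_trans le_next le2).
exact: leq_trans le_p lt2.
Qed.

Lemma minimal_row_length (p : grid a b) :
  [forall r, glt r p ==> (r \in I)] =
  (p.2 <= row_length p.1)%N && ((p.1 == 0 :> nat) || (p.2 < row_length p.1.-1))%N.
Proof.
apply/forallP/andP => [minp | [le_p lt_prev] r].
  split.
    case e2: (p.2 : nat) => [|k] //.
    have lt_kb : (k < b)%N by rewrite ltnW // -e2.
    have := minp (p.1, Ordinal lt_kb); rewrite gltE mem_ideal_row /= e2; lia.
  case e1: (p.1 : nat) => [|m] //.
  have lt_ma : (m < a)%N by rewrite ltnW // -e1.
  have := minp (Ordinal lt_ma, p.2); rewrite gltE mem_ideal_row /= e1; lia.
apply/implyP; rewrite gltE mem_ideal_row.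
case/orP => [/andP[lt1 le2] | /andP[/eqP -> lt2]]; last exact: leq_trans lt2 le_p.
have le_prev : (row_length p.1.-1 <= row_length r.1)%N.
  by apply: row_length_nonincr; rewrite -ltnS prednK // (leq_ltn_trans _ lt1).
move: lt_prev; rewrite (gtn_eqF (leq_ltn_trans _ lt1)) //= => lt_prev.
exact: leq_ltn_trans le2 (leq_trans lt_prev le_prev).
Qed.

Lemma Tminus_row_length (p : grid a b) :
  Tminus R p I = ((p.2.+1 == row_length p.1) && (row_length p.1.+1 <= p.2))%N%:R.
Proof. by rewrite /Tminus maximal_row_length mem_ideal_row; congr _%:R; lia. Qed.

Lemma Tplus_row_length (p : grid a b) :
  Tplus R p I =
  ((p.2 == row_length p.1 :> nat) && ((p.1 == 0 :> nat) || (p.2 < row_length p.1.-1)))%N%:R.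
Proof. by rewrite /Tplus minimal_row_length mem_ideal_row; congr _%:R; lia. Qed.

Definition row_Tminus (x : nat) : RQ R :=
  \sum_(p : grid a b | p.1 == x :> nat) Tminus R p I.

Definition row_Tplus (x : nat) : RQ R :=
  \sum_(p : grid a b | p.1 == x :> nat) Tplus R p I.

Lemma sum_row_indicator (x k : nat) (P : nat -> bool) : (x < a)%N ->
  \sum_(p : grid a b | p.1 == x :> nat) ((p.2 == k :> nat) && P p.2)%:R
    = ((k < b)%N && P k)%:R :> RQ R.
Proof.
move=> lt_xa; have [lt_kb | le_bk] := ltnP k b; last first.
  rewrite big1 // => p _; case: eqP => // e2; exfalso.
  by have := ltn_ord p.2; rewrite e2 ltnNge le_bk.
rewrite (bigD1 ((Ordinal lt_xa, Ordinal lt_kb) : grid a b)) //= eqxx /=.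
rewrite big1 ?addr0 // => -[x' y'] /= /andP[/eqP x'x].
rewrite xpair_eqE -!val_eqE /= x'x eqxx /=.
by case: eqP.
Qed.

Lemma row_Tminus_row_length x : (x < a)%N ->
  row_Tminus x = ((0 < row_length x) && (row_length x.+1 < row_length x))%N%:R.
Proof.
move=> lt_xa; rewrite /row_Tminus.
rewrite (eq_bigr (fun p : grid a b => ((p.2 == (row_length x).-1 :> nat) &&
           ((0 < row_length x) && (row_length x.+1 < row_length x)))%N%:R)).
  rewrite (@sum_row_indicator x _ (fun=> _) lt_xa).
  by have := row_length_le x; case: (row_length x) => [|L ->]; rewrite ?andbF.
by move=> p /eqP p1; rewrite Tminus_row_length p1; congr _%:R; lia.
Qed.

Lemma row_Tplus_row_length x : (x < a)%N ->
  row_Tplus x = ((row_length x < b) && ((x == 0) || (row_length x < row_length x.-1)))%N%:R.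
Proof.
move=> lt_xa; rewrite /row_Tplus.
rewrite (eq_bigr (fun p : grid a b => ((p.2 == row_length x :> nat) &&
           ((x == 0) || (p.2 < row_length x.-1)))%N%:R)).
  exact: (@sum_row_indicator x _ (fun y => (x == 0) || (y < row_length x.-1))%N).
by move=> p /eqP p1; rewrite Tplus_row_length p1.
Qed.

Lemma row_Tplus_succ x : (x.+1 < a)%N -> row_Tplus x.+1 = row_Tminus x.
Proof.
move=> lt_xa; rewrite row_Tplus_row_length // row_Tminus_row_length ?(ltnW lt_xa) //=.
by congr _%:R; have := row_length_le x; lia.
Qed.

Lemma row_Tplus_first : (0 < a)%N -> row_Tplus 0 = 1 - (b <= row_length 0)%N%:R.
Proof.
move=> a_gt0; rewrite row_Tplus_row_length //= andbT ltnNge.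
by case: (b <= _)%N; rewrite ?subr0 ?subrr.
Qed.

Lemma row_Tminus_last : (0 < a)%N -> row_Tminus a.-1 = (0 < row_length a.-1)%N%:R.
Proof.
move=> a_gt0; rewrite row_Tminus_row_length ?ltn_predL // prednK //.
by rewrite (row_length_out (leqnn a)) andbb.
Qed.

End RowLengths.

Definition tr_grid a b (p : grid a b) : grid b a := (p.2, p.1).
Definition tr_set a b (I : {set grid a b}) : {set grid b a} := [set p | tr_grid p \in I].

Lemma tr_gridK a b : cancel (@tr_grid a b) (@tr_grid b a).
Proof. by case. Qed.

Lemma mem_tr_set a b (I : {set grid a b}) p : (tr_grid p \in tr_set I) = (p \in I).
Proof. by rewrite inE tr_gridK. Qed.

Lemma gle_tr a b (x y : grid a b) : gle (tr_grid x) (tr_grid y) = gle x y.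
Proof. by rewrite /gle andbC. Qed.

Lemma glt_tr a b (x y : grid a b) : glt (tr_grid x) (tr_grid y) = glt x y.
Proof. by rewrite /glt gle_tr (inj_eq (can_inj (@tr_gridK a b))). Qed.

Lemma is_ideal_tr a b (I : {set grid a b}) : is_ideal I -> is_ideal (tr_set I).
Proof.
move=> idealI; apply/forallP => x; apply/forallP => y; apply/implyP => /andP[le_yx].
by rewrite !inE => xI; apply: (ideal_down idealI) xI; rewrite gle_tr.
Qed.

Lemma Tminus_tr R a b (I : {set grid a b}) p :
  Tminus R (tr_grid p) (tr_set I) = Tminus R p I.
Proof.
rewrite /Tminus mem_tr_set; congr ((_ && _)%:R); apply/forallP/forallP => maxp r.
  by have := maxp (tr_grid r); rewrite glt_tr mem_tr_set.
by rewrite -[r]tr_gridK glt_tr mem_tr_set; apply: maxp.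
Qed.

Lemma Tplus_tr R a b (I : {set grid a b}) p :
  Tplus R (tr_grid p) (tr_set I) = Tplus R p I.
Proof.
rewrite /Tplus mem_tr_set; congr ((_ && _)%:R); apply/forallP/forallP => minp r.
  by have := minp (tr_grid r); rewrite glt_tr mem_tr_set.
by rewrite -[r]tr_gridK glt_tr mem_tr_set; apply: minp.
Qed.

Lemma sum_tr a b (V : nmodType) (F : grid b a -> V) (P : pred (grid b a)) :
  \sum_(p | P p) F p = \sum_(p : grid a b | P (tr_grid p)) F (tr_grid p).
Proof. by apply: reindex; exists (@tr_grid b a) => p _; rewrite tr_gridK. Qed.

Lemma qequiv_tr R a b (f g : {set grid b a} -> RQ R) :
  qequiv f g -> qequiv (fun I => f (tr_set I)) (fun I => g (tr_set I)).
Proof.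
case=> c fg; exists (fun p => c (tr_grid p)) => I idealI.
rewrite fg ?is_ideal_tr // sum_tr; apply: eq_bigr => p _.
by rewrite /Tq Tplus_tr Tminus_tr.
Qed.

Lemma eq_qequiv R a b (f g : {set grid a b} -> RQ R) :
  (forall I, is_ideal I -> f I = g I) -> qequiv f g.
Proof.
by move=> fg; exists (fun=> 0) => I idealI; rewrite fg // subrr big1 // => p; rewrite mul0r.
Qed.

Lemma qequiv_congr R a b (f g f' g' : {set grid a b} -> RQ R) :
  qequiv f' g' -> (forall I, is_ideal I -> f I - g I = f' I - g' I) -> qequiv f g.
Proof. by case=> c fg' fg; exists c => I idealI; rewrite fg // fg'. Qed.

Lemma qequiv_lincomb R a b (f g f1 g1 f2 g2 : {set grid a b} -> RQ R) (k1 k2 : RQ R) :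
  qequiv f1 g1 -> qequiv f2 g2 ->
  (forall I, is_ideal I -> f I - g I = k1 * (f1 I - g1 I) + k2 * (f2 I - g2 I)) ->
  qequiv f g.
Proof.
case=> [c1 fg1] [c2 fg2] fg; exists (fun p => k1 * c1 p + k2 * c2 p) => I idealI.
rewrite fg // fg1 // fg2 // !mulr_sumr -big_split /=.
by apply: eq_bigr => p _; rewrite mulrDl !mulrA.
Qed.

Lemma qequiv_sum_Tq R a b (P : pred (grid a b)) :
  qequiv (fun I => \sum_(p | P p) Tplus R p I) (fun I => qvar R * \sum_(p | P p) Tminus R p I).
Proof.
exists (fun p => (P p)%:R) => I _; rewrite mulr_sumr -sumrB big_mkcond /=.
by apply: eq_bigr => p _; case: (P p); rewrite ?mul1r ?mul0r.
Qed.

Lemma qequiv_row R a b x :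
  qequiv (fun I : {set grid a b} => row_Tplus R I x) (fun I => qvar R * row_Tminus R I x).
Proof. exact: qequiv_sum_Tq. Qed.

Lemma qint_mul R m : (1 - qvar R) * qint R m = 1 - qvar R ^+ m.
Proof. by rewrite /qint -opprB -[RHS]opprB subrX1 mulNr. Qed.

Lemma one_sub_qvarX_neq0 R m : (0 < m)%N -> 1 - qvar R ^+ m != 0.
Proof.
move=> m_gt0; rewrite -oppr_eq0 opprB /qvar -tofracXn -tofrac1 -tofracB tofrac_eq0.
by rewrite -polyC1 monic_neq0 // monicXnsubC.
Qed.

Lemma qint_ratio R m n : (0 < n)%N ->
  qint R m / qint R n = (1 - qvar R ^+ m) / (1 - qvar R ^+ n).
Proof.
have := @one_sub_qvarX_neq0 R 1 isT; rewrite expr1 => q_neq1 _.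
by rewrite -!qint_mul -mulf_div divff // mul1r.
Qed.

Definition corner_a1 a b : grid a.+1 b.+1 := (ord_max, ord0).
Definition corner_1b a b : grid a.+1 b.+1 := (ord0, ord_max).

Definition indicator R a b (p : grid a b) (I : {set grid a b}) : RQ R := (p \in I)%:R.

Lemma indicator_tr R a b (p : grid a b) I :
  indicator R (tr_grid p) (tr_set I) = indicator R p I.
Proof. by rewrite /indicator mem_tr_set. Qed.

Section Corners.
Variables (R : realType) (a b : nat).
Local Notation q := (qvar R).
Local Notation u := (indicator R (corner_a1 a b)).
Local Notation s := (indicator R (corner_1b a b)).

Lemma row_Tminus_geometric k x : (x + k = a)%N ->
  qequiv (fun I : {set grid a.+1 b.+1} => row_Tminus R I x) (fun I => q ^+ k * u I).
Proof.
elim: k x => [|k IHk] x xk.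
  apply: eq_qequiv => I idealI; rewrite addn0 in xk; rewrite xk expr0 mul1r.
  by rewrite (row_Tminus_last _ idealI) // /indicator (mem_ideal_row idealI).
have xk' : (x.+1 + k = a)%N by rewrite addSn -addnS.
apply: (qequiv_lincomb (qequiv_row R a.+1 b.+1 x.+1) (IHk _ xk')
          (k1 := 1) (k2 := q)) => I idealI.
by rewrite row_Tplus_succ ?ltnS -?xk' ?leq_addr // exprS; ring.
Qed.

Lemma qequiv_first_row :
  qequiv (fun I : {set grid a.+1 b.+1} => 1 - s I) (fun I => q ^+ a.+1 * u I).
Proof.
apply: (qequiv_lincomb (qequiv_row R a.+1 b.+1 0) (row_Tminus_geometric (add0n a))
          (k1 := 1) (k2 := q)) => I idealI.
by rewrite row_Tplus_first // /indicator (mem_ideal_row idealI) exprS; ring.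
Qed.

End Corners.

Lemma qequiv_corner_a1 R a b :
  qequiv (indicator R (corner_a1 a b)) (fun _ => qint R b.+1 / qint R (a.+1 + b.+1)).
Proof.
have first_col := qequiv_tr (qequiv_first_row R b a).
set A := qvar R ^+ a.+1; set B := qvar R ^+ b.+1.
have AB_neq0 : 1 - A * B != 0 by rewrite -exprD one_sub_qvarX_neq0.
(* eliminate s between 1 - u ≡ B s and 1 - s ≡ A u *)
apply: (qequiv_lincomb first_col (qequiv_first_row R a b)
          (k1 := - (1 - A * B)^-1) (k2 := B / (1 - A * B))) => I _.
rewrite -[corner_1b b a]/(tr_grid (corner_a1 a b)) -[corner_a1 b a]/(tr_grid (corner_1b a b)).
rewrite !indicator_tr qint_ratio // exprD -/A -/B.
rewrite -[indicator R _ I in LHS](mulfK AB_neq0).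
by ring.
Qed.

Lemma row_Tminus_qequiv R a b i : (1 <= i <= a.+1)%N ->
  qequiv (fun I : {set grid a.+1 b.+1} =>
            \sum_(p : grid a.+1 b.+1 | p.1.+1 == i) Tminus R p I)
         (fun _ => qvar R ^+ (a.+1 - i) * qint R b.+1 / qint R (a.+1 + b.+1)).
Proof.
move=> /andP[i_gt0 le_ia]; have xk : (i.-1 + (a.+1 - i) = a)%N by lia.
apply: (qequiv_lincomb (row_Tminus_geometric R b xk) (qequiv_corner_a1 R a b)
          (k1 := 1) (k2 := qvar R ^+ (a.+1 - i))) => I _.
rewrite /row_Tminus [in RHS](eq_bigl (fun p : grid a.+1 b.+1 => p.1.+1 == i)); first by ring.
by move=> p /=; apply/eqP/eqP; lia.
Qed.

Lemma col_Tminus_qequiv R a b j : (1 <= j <= b.+1)%N ->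
  qequiv (fun I : {set grid a.+1 b.+1} =>
            \sum_(p : grid a.+1 b.+1 | p.2.+1 == j) Tminus R p I)
         (fun _ => qvar R ^+ (b.+1 - j) * qint R a.+1 / qint R (a.+1 + b.+1)).
Proof.
move=> range_j; apply: qequiv_congr (qequiv_tr (row_Tminus_qequiv R a range_j)) _ => I _.
rewrite [in RHS]sum_tr (addnC b.+1); congr (_ - _).
by apply: eq_bigr => p _; rewrite Tminus_tr.
Qed.

Theorem theorem5p12 (R : realType) (a b : nat) (ha : (1 <= a)%N) (hb : (1 <= b)%N) :
  (forall i : nat, (1 <= i <= a)%N ->
     qequiv (fun I : {set grid a b} =>
               \sum_(p : grid a b | (p.1).+1 == i) Tminus R p I)
            (fun _ => qvar R ^+ (a - i) * qint R b / qint R (a + b)))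
  /\
  (forall j : nat, (1 <= j <= b)%N ->
     qequiv (fun I : {set grid a b} =>
               \sum_(p : grid a b | (p.2).+1 == j) Tminus R p I)
            (fun _ => qvar R ^+ (b - j) * qint R a / qint R (a + b))).
Proof.
case: a ha => // a _; case: b hb => // b _.
by split => [i /row_Tminus_qequiv | j /col_Tminus_qequiv].
Qed.
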